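(* For $(a,b)\in\mathbb{R}^2$, let $\mathfrak{g}_{a,b}$ be the $8$-dimensional real nilpotent Lie algebra with a basis $\{e^1,\dots,e^8\}$ of its dual satisfying $$de^1=de^2=de^3=0,\quad de^4=e^{13},\quad de^5=e^{23},\quad de^6=3e^{14}+e^{25}-2e^{35},$$ $$de^7=2a\,e^{12}+e^{15}+e^{24}+2e^{34},\quad de^8=-2b\,e^{14}+e^{16}-2b\,e^{25}+e^{27}-2e^{45}.$$ If $\mathfrak{g}_{a,b}$ and $\mathfrak{g}_{a',b'}$ are isomorphic, then there is a non-zero real number $\rho$ such that $a'=\pm\rho a$ and $b'=\rho b$.
   Context: $e^{ij}=e^i\wedge e^j$, and $d$ denotes the Chevalley–Eilenberg differential, $d\alpha(X,Y)=-\alpha([X,Y])$ for $\alpha\in\mathfrak{g}^*$; these equations define the Lie bracket. *)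

From mathcomp Require Import all_boot all_order all_algebra.
From mathcomp Require Import reals.
Set Implicit Arguments. Unset Strict Implicit. Unset Printing Implicit Defensive.
Import Order.TTheory GRing.Theory Num.Theory.
Local Open Scope ring_scope.

Section LieAlg.
Variable R : realType.

(* index i : 'I_8 stands for the paper's index i+1 *)
Definition ix (n : nat) : 'I_8 := inord n.

(* e^{ij} = e^i /\ e^j as the antisymmetric matrix of its values:
   (e^{ij})(e_p, e_q) = M p q *)
Definition wedge (i j : nat) : 'M[R]_8 := delta_mx (ix i) (ix j) - delta_mx (ix j) (ix i).

(* dform a b k = d e^(k+1), as an antisymmetric matrix of values on basis pairs *)
Definition dform (a b : R) (k : 'I_8) : 'M[R]_8 :=
  match val k with
  | 3 => wedge 0 2
  | 4 => wedge 1 2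
  | 5 => 3 *: wedge 0 3 + wedge 1 4 - 2 *: wedge 2 4
  | 6 => (2 * a) *: wedge 0 1 + wedge 0 4 + wedge 1 3 + 2 *: wedge 2 3
  | 7 => (- (2 * b)) *: wedge 0 3 + wedge 0 5 - (2 * b) *: wedge 1 4
         + wedge 1 6 - 2 *: wedge 3 4
  | _ => 0
  end.

(* Lie bracket of g_{a,b} on row vectors (coordinates in the basis e_1..e_8
   dual to e^1..e^8): e^k([x,y]) = - d e^k (x, y). *)
Definition lie (a b : R) (x y : 'rV[R]_8) : 'rV[R]_8 :=
  \row_k (- (x *m dform a b k *m y^T) 0 0).

Definition lie_isomorphic (a b a' b' : R) : Prop :=
  exists f : 'M[R]_8, f \in unitmx /\
    forall x y : 'rV[R]_8, lie a' b' (x *m f) (y *m f) = lie a b x y *m f.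

End LieAlg.

From mathcomp Require Import all_boot all_order all_algebra.
From mathcomp Require Import reals.
From mathcomp Require Import ring lra zify.
Set Implicit Arguments. Unset Strict Implicit. Unset Printing Implicit Defensive.
Import Order.TTheory GRing.Theory Num.Theory.
Local Open Scope ring_scope.

(* Write an isomorphism f : g_{a,b} -> g_{a',b'} as f e_i = sum_j F_ij e_j; being a
   homomorphism means f^*(d e'^k) = d (f^* e'^k) for all k, a family of quadratic
   identities in the F_ij.  First, f preserves the lower central series
   g > <e4,...,e8> > <e6,e7,e8> > <e8>, so F is block triangular.  The induced map on
   g/[g,g] is invertible and [f e1, f e2] has no e4, e5 component, which forces f e1 and
   f e2 into <e1,e2> + [g,g].  The identities in degrees 2, 3 and 4 then express the lower
   blocks through the top one, and comparing them shows that modulo [g,g]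
   f e1 = +-t e1, f e2 = t e2 and f e3 = t e3 with t <> 0.  Finally the coefficients of a
   and b in the remaining identities give a' = t a and b' = F_11 b, so rho = F_11. *)

Section Coordinates.
Variable R : realType.
Implicit Types (a b : R) (x y : 'rV[R]_8) (f M : 'M[R]_8).

Lemma ixK n : (n < 8)%N -> val (ix n) = n.
Proof. exact: inordK. Qed.

Lemma eq_ix n m : (n < 8)%N -> (m < 8)%N -> (ix n == ix m) = (n == m).
Proof. by move=> hn hm; rewrite -val_eqE /= !ixK. Qed.

Definition vcoord x n : R := x 0 (ix n).
(* [entry f i j] is F_(i+1)(j+1): row i of f is the image of e_(i+1). *)
Definition entry f i j : R := f (ix i) (ix j).
Definition basis i : 'rV[R]_8 := delta_mx 0 (ix i).
Definition form_at x y M : R := (x *m M *m y^T) 0 0.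
Definition de a b k x y : R := form_at x y (dform a b (ix k)).

Lemma form_atD x y M N : form_at x y (M + N) = form_at x y M + form_at x y N.
Proof. by rewrite /form_at mulmxDr mulmxDl mxE. Qed.

Lemma form_atN x y M : form_at x y (- M) = - form_at x y M.
Proof. by rewrite /form_at mulmxN mulNmx mxE. Qed.

Lemma form_atZ x y c M : form_at x y (c *: M) = c * form_at x y M.
Proof. by rewrite /form_at -scalemxAr -scalemxAl mxE. Qed.

Lemma form_at_delta x y i j : form_at x y (delta_mx i j) = x 0 i * y 0 j.
Proof.
rewrite /form_at !mxE (bigD1 j) //= big1 ?addr0 => [|k /negbTE nkj].
  rewrite !mxE (bigD1 i) //= big1 ?addr0 => [|k /negbTE nki]; last first.
    by rewrite !mxE nki mulr0.
  by rewrite !mxE !eqxx mulr1.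
by rewrite !mxE big1 ?mul0r // => l _; rewrite !mxE nkj andbF mulr0.
Qed.

Let de_expand := (form_atD, form_atN, form_atZ, form_at_delta).

Lemma de_low a b k x y : (k < 3)%N -> de a b k x y = 0.
Proof.
by case: k => [|[|[|]]] // _; rewrite /de /dform ixK // /form_at mulmx0 mul0mx mxE.
Qed.

Lemma de3 a b x y : de a b 3 x y = vcoord x 0 * vcoord y 2 - vcoord x 2 * vcoord y 0.
Proof. by rewrite /de /dform ixK // /wedge !de_expand. Qed.

Lemma de4 a b x y : de a b 4 x y = vcoord x 1 * vcoord y 2 - vcoord x 2 * vcoord y 1.
Proof. by rewrite /de /dform ixK // /wedge !de_expand. Qed.

Lemma de5 a b x y : de a b 5 x y =
  3 * (vcoord x 0 * vcoord y 3 - vcoord x 3 * vcoord y 0)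
  + (vcoord x 1 * vcoord y 4 - vcoord x 4 * vcoord y 1)
  - 2 * (vcoord x 2 * vcoord y 4 - vcoord x 4 * vcoord y 2).
Proof. by rewrite /de /dform ixK // /wedge !de_expand. Qed.

Lemma de6 a b x y : de a b 6 x y =
  2 * a * (vcoord x 0 * vcoord y 1 - vcoord x 1 * vcoord y 0)
  + (vcoord x 0 * vcoord y 4 - vcoord x 4 * vcoord y 0)
  + (vcoord x 1 * vcoord y 3 - vcoord x 3 * vcoord y 1)
  + 2 * (vcoord x 2 * vcoord y 3 - vcoord x 3 * vcoord y 2).
Proof. by rewrite /de /dform ixK // /wedge !de_expand. Qed.

Lemma de7 a b x y : de a b 7 x y =
  - (2 * b) * (vcoord x 0 * vcoord y 3 - vcoord x 3 * vcoord y 0)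
  + (vcoord x 0 * vcoord y 5 - vcoord x 5 * vcoord y 0)
  - 2 * b * (vcoord x 1 * vcoord y 4 - vcoord x 4 * vcoord y 1)
  + (vcoord x 1 * vcoord y 6 - vcoord x 6 * vcoord y 1)
  - 2 * (vcoord x 3 * vcoord y 4 - vcoord x 4 * vcoord y 3).
Proof. by rewrite /de /dform ixK // /wedge !de_expand. Qed.

Lemma vcoord_row f i n : vcoord (row (ix i) f) n = entry f i n.
Proof. by rewrite /vcoord /entry mxE. Qed.

Lemma vcoord_basis i n : (i < 8)%N -> (n < 8)%N -> vcoord (basis i) n = (i == n)%:R.
Proof. by move=> hi hn; rewrite /vcoord /basis mxE eq_ix // eqxx eq_sym. Qed.

End Coordinates.

Definition lie_hom (R : realType) (a b a' b' : R) (f : 'M[R]_8) :=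
  forall x y, lie a' b' (x *m f) (y *m f) = lie a b x y *m f.

(* The lower central series degree of e_(n+1): g^k is spanned by the e_(n+1) with
   weight n >= k. *)
Definition weight (n : nat) : nat :=
  (if n < 3 then 1 else if n < 5 then 2 else if n < 7 then 3 else 4)%N.

Lemma hom_de (R : realType) (a b a' b' : R) (f : 'M[R]_8) :
  lie_hom a b a' b' f -> forall i j k,
  de a' b' k (row (ix i) f) (row (ix j) f) =
  \sum_(n < 8) de a b n (basis R i) (basis R j) * entry f n k.
Proof.
move=> hom i j k.
have := congr1 (fun v : 'rV[R]_8 => v 0 (ix k)) (hom (basis R i) (basis R j)).
rewrite /= [in X in X = _]mxE [in X in _ = X]mxE -!rowE.
move=> E; rewrite /de /form_at -[LHS]opprK E -sumrN; apply: eq_bigr => n _.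
by rewrite /lie mxE /entry /ix inord_val mulNr opprK.
Qed.

Ltac bracket E :=
  move: E;
  rewrite !big_ord_recr big_ord0 /= ?de3 ?de4 ?de5 ?de6 ?de7 ?de_low
    ?vcoord_row ?vcoord_basis //=.

Ltac kill_entries L :=
  repeat match goal with |- context[entry _ ?i ?j] => rewrite (L i j isT isT) end.

Lemma hom_weight (R : realType) (a b a' b' : R) (f : 'M[R]_8) :
  lie_hom a b a' b' f -> forall i j, (i < 8)%N -> (weight j < weight i)%N -> entry f i j = 0.
Proof.
move=> hom i j.
have lcs2 i' j' : (3 <= i' < 8)%N -> (j' < 3)%N -> entry f i' j' = 0.
  move=> /andP[hi3 hi8] hj.
  have r3 : entry f 3 j' = 0 by bracket (hom_de hom 0 2 j'); lra.
  have r4 : entry f 4 j' = 0 by bracket (hom_de hom 1 2 j'); lra.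
  have r6 : entry f 6 j' = 0 by bracket (hom_de hom 0 4 j'); lra.
  have r7 : entry f 7 j' = 0 by bracket (hom_de hom 0 5 j'); lra.
  have r5 : entry f 5 j' = 0 by bracket (hom_de hom 0 3 j'); rewrite r7; lra.
  by case: i' hi3 hi8 => [|[|[|[|[|[|[|[|i']]]]]]]].
have lcs3 i' j' : (5 <= i' < 8)%N -> (j' < 5)%N -> entry f i' j' = 0.
  move=> /andP[hi5 hi8] hj.
  have [hj3 | hj3] := ltnP j' 3; first by apply: lcs2 => //; lia.
  have z73 : entry f 7 3 = 0 by bracket (hom_de hom 0 5 3); kill_entries lcs2; lra.
  have z74 : entry f 7 4 = 0 by bracket (hom_de hom 0 5 4); kill_entries lcs2; lra.
  have z63 : entry f 6 3 = 0 by bracket (hom_de hom 0 4 3); kill_entries lcs2; lra.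
  have z64 : entry f 6 4 = 0 by bracket (hom_de hom 0 4 4); kill_entries lcs2; lra.
  have z53 : entry f 5 3 = 0.
    by bracket (hom_de hom 0 3 3); kill_entries lcs2; rewrite z73; lra.
  have z54 : entry f 5 4 = 0.
    by bracket (hom_de hom 0 3 4); kill_entries lcs2; rewrite z74; lra.
  by case: i' hi5 hi8 => [|[|[|[|[|[|[|[|i']]]]]]]] // _ _;
    case: j' hj3 hj => [|[|[|[|[|j']]]]].
have z75 : entry f 7 5 = 0 by bracket (hom_de hom 0 5 5); kill_entries lcs3; lra.
have z76 : entry f 7 6 = 0 by bracket (hom_de hom 0 5 6); kill_entries lcs3; lra.
case: i => [|[|[|[|[|[|[|[|i]]]]]]]] // _;
  case: j => [|[|[|[|[|[|[|j]]]]]]] // _;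
  by [ | apply: lcs2 | apply: lcs3].
Qed.

(* The side conditions of [hom_weight] are closed by computation ([isT]) for numeral
   indices; the match backtracks over the occurrences where they fail. *)
Ltac rewrite_entries :=
  repeat match goal with
  | hw : lie_hom _ _ _ _ ?f |- context[entry ?f ?i ?j] =>
      rewrite (@hom_weight _ _ _ _ _ _ hw i j isT isT)
  | h : entry ?f ?i ?j = _ |- context[entry ?f ?i ?j] => rewrite h
  end.

Ltac bracket_eq E :=
  bracket E; rewrite_entries;
  rewrite ?(mul0r, mulr0, mul1r, mulr1, add0r, addr0, sub0r, subr0, oppr0).

Lemma minors_coord_eq0 (R : comRingType) (x0 x1 x2 y0 y1 y2 u0 u1 u2 : R) :
  x0 * u0 + x1 * u1 + x2 * u2 = 1 -> y0 * u0 + y1 * u1 + y2 * u2 = 0 ->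
  x0 * y2 - x2 * y0 = 0 -> x1 * y2 - x2 * y1 = 0 -> y2 = 0.
Proof.
move=> xu yu m0 m1.
have : y2 * (x0 * u0 + x1 * u1 + x2 * u2) =
        x2 * (y0 * u0 + y1 * u1 + y2 * u2) + u0 * (x0 * y2 - x2 * y0) + u1 * (x1 * y2 - x2 * y1).
  by ring.
by rewrite xu yu m0 m1 mulr1 !mulr0 !addr0.
Qed.

Lemma mulmx_hom_top (R : realType) (a b a' b' : R) (f g : 'M[R]_8) i j :
  lie_hom a b a' b' g -> (j < 3)%N ->
  (f *m g) (ix i) (ix j) =
  entry f i 0 * entry g 0 j + entry f i 1 * entry g 1 j + entry f i 2 * entry g 2 j.
Proof.
move=> hom hj; rewrite mxE (eq_bigr (fun l : 'I_8 => entry f i l * entry g l j)).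
  have low l : (3 <= l < 8)%N -> entry g l j = 0.
    move=> hl; have l3 : (l < 3)%N = false by lia.
    apply: (hom_weight hom); first lia.
    by rewrite /weight hj l3; case: (l < 5)%N; case: (l < 7)%N.
  rewrite !big_ord_recr big_ord0 /= (low 3) ?(low 4) ?(low 5) ?(low 6) ?(low 7) //.
  by rewrite !mulr0 !addr0 add0r.
by move=> l _; rewrite /entry /ix inord_val.
Qed.

Lemma left_kernel2_eq0 (R : fieldType) (a00 a01 a10 a11 b00 b01 b10 b11 c u0 u1 : R) :
  c != 0 ->
  a00 * b00 + a01 * b10 = c -> a00 * b01 + a01 * b11 = 0 ->
  a10 * b00 + a11 * b10 = 0 -> a10 * b01 + a11 * b11 = c ->
  u0 * b00 + u1 * b10 = 0 -> u0 * b01 + u1 * b11 = 0 -> u0 = 0 /\ u1 = 0.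
Proof.
move=> c0 p00 p01 p10 p11 ub0 ub1.
have detB : b00 * b11 - b01 * b10 != 0.
  have : (a00 * a11 - a01 * a10) * (b00 * b11 - b01 * b10) =
         (a00 * b00 + a01 * b10) * (a10 * b01 + a11 * b11)
         - (a00 * b01 + a01 * b11) * (a10 * b00 + a11 * b10) by ring.
  rewrite p00 p01 p10 p11 mul0r subr0 => /eqP; apply: contraTneq => ->.
  by rewrite mulr0 eq_sym mulf_neq0.
split; apply: (mulIf detB); rewrite mul0r.
  have -> : u0 * (b00 * b11 - b01 * b10) =
            b11 * (u0 * b00 + u1 * b10) - b10 * (u0 * b01 + u1 * b11) by ring.
  by rewrite ub0 ub1 !mulr0 subr0.
have -> : u1 * (b00 * b11 - b01 * b10) =
          b00 * (u0 * b01 + u1 * b11) - b01 * (u0 * b00 + u1 * b10) by ring.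
by rewrite ub0 ub1 !mulr0 subr0.
Qed.

Section Iso.
Variables (R : realType) (a b a' b' : R) (f : 'M[R]_8).
Hypotheses (hom : lie_hom a b a' b' f) (f_unit : f \in unitmx).

Local Notation F := (entry f).
Local Notation G := (entry (invmx f)).

Lemma hom_invmx : lie_hom a' b' a b (invmx f).
Proof.
move=> x y; have := hom (x *m invmx f) (y *m invmx f).
by rewrite !(mulmxKV f_unit) => ->; rewrite (mulmxK f_unit).
Qed.

Lemma mulmxV_top i j : (i < 3)%N -> (j < 3)%N ->
  F i 0 * G 0 j + F i 1 * G 1 j + F i 2 * G 2 j = (i == j)%:R.
Proof.
move=> hi hj; rewrite -(mulmx_hom_top _ _ hom_invmx hj) (mulmxV f_unit) mxE eq_ix //.
  exact: ltn_trans hi _.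
exact: ltn_trans hj _.
Qed.

Lemma mulVmx_top i j : (i < 3)%N -> (j < 3)%N ->
  G i 0 * F 0 j + G i 1 * F 1 j + G i 2 * F 2 j = (i == j)%:R.
Proof.
move=> hi hj; rewrite -(mulmx_hom_top _ _ hom hj) (mulVmx f_unit) mxE eq_ix //.
  exact: ltn_trans hi _.
exact: ltn_trans hj _.
Qed.

Lemma iso_top_col : F 0 2 = 0 /\ F 1 2 = 0.
Proof.
have m0 : F 0 0 * F 1 2 - F 0 2 * F 1 0 = 0 by bracket_eq (hom_de hom 0 1 3); lra.
have m1 : F 0 1 * F 1 2 - F 0 2 * F 1 1 = 0 by bracket_eq (hom_de hom 0 1 4); lra.
split.
  by apply: (minors_coord_eq0 (@mulmxV_top 1 1 isT isT) (@mulmxV_top 0 1 isT isT)); lra.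
exact: (minors_coord_eq0 (@mulmxV_top 0 0 isT isT) (@mulmxV_top 1 0 isT isT)).
Qed.

Lemma iso_nondegenerate : F 2 2 != 0 /\ F 0 0 * F 1 1 - F 0 1 * F 1 0 != 0.
Proof.
have [z02 z12] := iso_top_col.
split.
  have := @mulVmx_top 2 2 isT isT; rewrite z02 z12 !mulr0 !add0r => /eqP.
  by apply: contraTneq => ->; rewrite mulr0 eq_sym oner_eq0.
have : (F 0 0 * F 1 1 - F 0 1 * F 1 0) * (G 0 0 * G 1 1 - G 0 1 * G 1 0) =
       (F 0 0 * G 0 0 + F 0 1 * G 1 0) * (F 1 0 * G 0 1 + F 1 1 * G 1 1)
       - (F 0 0 * G 0 1 + F 0 1 * G 1 1) * (F 1 0 * G 0 0 + F 1 1 * G 1 0) by ring.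
have top i j : (i < 2)%N -> (j < 3)%N -> F i 0 * G 0 j + F i 1 * G 1 j = (i == j)%:R.
  move=> hi hj; rewrite -(mulmxV_top (ltn_trans hi _) hj) //.
  by case: i hi => [|[|]] // _; rewrite ?z02 ?z12 mul0r addr0.
rewrite !top // mul0r subr0 mulr1 => /eqP.
by apply: contraTneq => ->; rewrite mul0r eq_sym oner_eq0.
Qed.

Lemma iso_degree2_block :
  [/\ F 3 3 = F 0 0 * F 2 2, F 3 4 = F 0 1 * F 2 2,
      F 4 3 = F 1 0 * F 2 2 & F 4 4 = F 1 1 * F 2 2].
Proof.
have [z02 z12] := iso_top_col.
split; [bracket_eq (hom_de hom 0 2 3) | bracket_eq (hom_de hom 0 2 4)
       | bracket_eq (hom_de hom 1 2 3) | bracket_eq (hom_de hom 1 2 4)]; lra.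
Qed.

Lemma iso_center_entry : F 7 7 = F 2 2 ^+ 2 * (F 0 0 * F 1 1 - F 0 1 * F 1 0).
Proof.
have [z02 z12] := iso_top_col; have [s33 s34 s43 s44] := iso_degree2_block.
by bracket_eq (hom_de hom 3 4 7); lra.
Qed.

Lemma iso_third_row : F 2 0 = 0 /\ F 2 1 = 0.
Proof.
have [z02 z12] := iso_top_col; have [s33 s34 s43 s44] := iso_degree2_block.
have s77 := iso_center_entry; have [t0 d0] := iso_nondegenerate.
apply: (@left_kernel2_eq0 _ (F 0 0) (F 0 1) (F 1 0) (F 1 1) (F 5 5) (F 6 5) (F 5 6) (F 6 6)
                      (F 2 2 ^+ 2 * (F 0 0 * F 1 1 - F 0 1 * F 1 0))).
- by rewrite mulf_neq0 // expf_neq0.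
- by bracket_eq (hom_de hom 0 5 7); lra.
- by bracket_eq (hom_de hom 0 6 7); lra.
- by bracket_eq (hom_de hom 1 5 7); lra.
- by bracket_eq (hom_de hom 1 6 7); lra.
- by bracket_eq (hom_de hom 2 5 7); lra.
- by bracket_eq (hom_de hom 2 6 7); lra.
Qed.

Lemma iso_degree3_block :
  [/\ F 5 5 = (3 * F 1 0 ^+ 2 + F 1 1 ^+ 2) * F 2 2,
      F 5 6 = 2 * F 1 0 * F 1 1 * F 2 2,
      F 6 5 = (3 * F 0 0 * F 1 0 + F 0 1 * F 1 1) * F 2 2 &
      F 6 6 = (F 0 0 * F 1 1 + F 0 1 * F 1 0) * F 2 2].
Proof.
have [z02 z12] := iso_top_col; have [s33 s34 s43 s44] := iso_degree2_block.
have [z20 z21] := iso_third_row.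
split; [bracket_eq (hom_de hom 1 4 5) | bracket_eq (hom_de hom 1 4 6)
       | bracket_eq (hom_de hom 0 4 5) | bracket_eq (hom_de hom 0 4 6)]; lra.
Qed.

Lemma iso_diag :
  [/\ F 1 0 = 0, F 1 1 = F 2 2, F 0 1 = 0 & F 0 0 = F 2 2 \/ F 0 0 = - F 2 2].
Proof.
have [z02 z12] := iso_top_col; have [s33 s34 s43 s44] := iso_degree2_block.
have [z20 z21] := iso_third_row; have [t0 d0] := iso_nondegenerate.
have [s55 s56 s65 s66] := iso_degree3_block.
have h1 : 3 * F 1 0 ^+ 2 + F 1 1 ^+ 2 = F 1 1 * F 2 2.
  by apply: (mulIf t0); bracket_eq (hom_de hom 2 4 5); lra.
have h2 : F 1 0 * (F 2 2 + 2 * F 1 1) = 0.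
  by apply: (mulIf t0); rewrite mul0r; bracket_eq (hom_de hom 2 4 6); lra.
have z10 : F 1 0 = 0.
  move/eqP: h2; rewrite mulf_eq0 => /orP[/eqP // | /eqP ht].
  have : F 1 0 ^+ 2 + F 1 1 ^+ 2 = 0 by nra.
  by move/eqP; rewrite paddr_eq0 ?sqr_ge0 // !sqrf_eq0 => /andP[/eqP].
have s11 : F 1 1 = F 2 2.
  have f11 : F 1 1 != 0 by apply: contraNneq d0 => ->; rewrite z10 !mulr0 subr0.
  by apply: (mulfI f11); rewrite z10 in h1; nra.
have z01 : F 0 1 = 0.
  by do 2 apply: (mulfI t0); rewrite !mulr0; bracket_eq (hom_de hom 2 3 5); lra.
split => //.
have : (F 0 0 - F 2 2) * (F 0 0 + F 2 2) = 0.
  by apply: (mulfI t0); rewrite mulr0; bracket_eq (hom_de hom 0 3 5); lra.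
by move/eqP; rewrite mulf_eq0 subr_eq0 addr_eq0 => /orP[] /eqP; [left | right].
Qed.

Lemma iso_params : a' = F 2 2 * a /\ b' = F 0 0 * b.
Proof.
have [z02 z12] := iso_top_col; have [s33 s34 s43 s44] := iso_degree2_block.
have s77 := iso_center_entry; have [z20 z21] := iso_third_row.
have [t0 d0] := iso_nondegenerate; have [s55 s56 s65 s66] := iso_degree3_block.
have [z10 s11 z01 sgn] := iso_diag.
have s0 : F 0 0 != 0 by apply: contraNneq d0 => ->; rewrite z01 !mul0r subr0.
have s35 : F 3 5 = 3 * F 0 0 * F 2 3 + 2 * F 0 4 * F 2 2.
  by bracket_eq (hom_de hom 0 2 5); lra.
have s45 : F 4 5 = (F 2 4 + 2 * F 1 4) * F 2 2 by bracket_eq (hom_de hom 1 2 5); lra.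
have s46 : F 4 6 = (F 2 3 - 2 * F 1 3) * F 2 2 by bracket_eq (hom_de hom 1 2 6); lra.
have s57 : F 5 7 = F 2 3 * F 2 2 ^+ 2 by bracket_eq (hom_de hom 2 4 7); lra.
have s67 : F 6 7 = F 0 0 * F 2 2 * F 2 4 by bracket_eq (hom_de hom 2 3 7); lra.
have h04 : F 0 4 * F 2 2 = 3 * F 0 0 * F 1 3 by bracket_eq (hom_de hom 0 1 5); lra.
have e147 : 2 * (F 0 0 * b - b') * F 2 2 ^+ 3 = 4 * F 1 3 * F 2 2 ^+ 2.
  by bracket_eq (hom_de hom 1 4 7); lra.
have e037 : 2 * (F 0 0 * b - b') * F 2 2 ^+ 3 + 4 * F 0 0 * F 0 4 * F 2 2 = 0.
  by case: sgn => hs; bracket_eq (hom_de hom 0 3 7); lra.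
have z13 : F 1 3 = 0.
  have h : F 0 0 * F 0 4 + F 1 3 * F 2 2 = 0 by apply: (mulfI t0); rewrite mulr0; lra.
  apply: (mulfI t0); rewrite mulr0.
  by case: sgn => hs; rewrite hs in h h04; lra.
have hb : b' = F 0 0 * b.
  by do 3 apply: (mulfI t0); rewrite z13 in e147; lra.
have e047 : F 0 0 * F 1 4 = F 0 3 * F 2 2.
  by apply: (mulfI t0); bracket_eq (hom_de hom 0 4 7); lra.
split => //.
by apply: (mulfI s0); apply: (mulfI t0); bracket_eq (hom_de hom 0 1 6); lra.
Qed.

End Iso.

Theorem proposition3p1 (R : realType) (a b a' b' : R) :
  lie_isomorphic a b a' b' ->
  exists rho : R, rho != 0 /\ (a' = rho * a \/ a' = - (rho * a)) /\ b' = rho * b.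
Proof.
move=> [f [f_unit hom]].
have [t0 _] := iso_nondegenerate hom f_unit.
have [_ _ _ sgn] := iso_diag hom f_unit.
have [-> ->] := iso_params hom f_unit.
exists (entry f 0 0); case: sgn => ->; first by split=> //; split; [left|].
by rewrite oppr_eq0 mulNr opprK; split=> //; split; [right|].
Qed.
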